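(* In the symmetric-ordering setup, for every $w\ge2$ and all indices $\mu,\alpha_1,\ldots,\alpha_w$, $$\sum_{\sigma\in\Sigma_w}[\ldots[[\hat\partial^\mu,\hat x_{\alpha_{\sigma(1)}}],\hat x_{\alpha_{\sigma(2)}}],\ldots,\hat x_{\alpha_{\sigma(w)}}](1)=0\quad\text{in }U(\mathfrak g).$$
   Context: Symmetric-ordering setup: $\Bbbk$ is a field of characteristic $0$, $\mathfrak g$ an $n$-dimensional Lie algebra with basis $\hat x_1,\ldots,\hat x_n$; $\hat x_\alpha$ also denotes left multiplication by $\hat x_\alpha$ on $U(\mathfrak g)$, and commutators are taken in $\mathrm{End}_\Bbbk(U(\mathfrak g))$. $S(\mathfrak g)=\Bbbk[x_1,\ldots,x_n]$; the coexponential map $\xi:S(\mathfrak g)\to U(\mathfrak g)$ is the linear isomorphism $\xi(x_{\alpha_1}\cdots x_{\alpha_k})=\frac1{k!}\sum_{\sigma\in\Sigma_k}\hat x_{\alpha_{\sigma(1)}}\cdots\hat x_{\alpha_{\sigma(k)}}$; $\hat\partial^\mu\in\mathrm{End}_\Bbbk(U(\mathfrak g))$ is defined by $\hat\partial^\mu(\xi(f))=\xi(\partial f/\partial x_\mu)$. $\Sigma_w$ is the symmetric group; $1$ is the unit of $U(\mathfrak g)$. *)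

From HB Require Import structures.
From mathcomp Require Import all_boot all_order all_algebra all_fingroup.
Set Implicit Arguments. Unset Strict Implicit. Unset Printing Implicit Defensive.
Import Order.TTheory GRing.Theory Num.Theory.
Local Open Scope ring_scope.

Section SymOrd.
Variables (k : fieldType) (A : algType k) (n : nat) (x : 'I_n -> A).

Definition symprod (m : nat) (t : m.-tuple 'I_n) : A :=
  (m`!%:R)^-1 *: \sum_(s : 'S_m) \prod_(i < m) x (tnth t (s i)).

Definition symseq (s : seq 'I_n) : A := symprod (in_tuple s).

(* the multiset (monomial of S(g)) represented by a word *)
Definition monkey (s : seq 'I_n) : {ffun 'I_n -> nat} := [ffun i => count_mem i s].

Definition dropi (m : nat) (t : m.+1.-tuple 'I_n) (i : 'I_m.+1) : m.-tuple 'I_n :=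
  [tuple tnth t (lift i j) | j < m].

(* commutator [D, \hat x_a] in End(A), \hat x_a = left multiplication *)
Definition commx (D : A -> A) (a : 'I_n) : A -> A :=
  fun u => D (x a * u) - x a * D u.

Definition nested_comm (D : A -> A) (s : seq 'I_n) : A -> A :=
  foldl commx D s.

End SymOrd.

From HB Require Import structures.
From mathcomp Require Import all_boot all_order all_algebra all_fingroup.
From mathcomp Require Import zify.
Set Implicit Arguments. Unset Strict Implicit. Unset Printing Implicit Defensive.
Import GRing.Theory.
Local Open Scope ring_scope.

(* Write P(v) for the ordered product of the letters of a word v and xi(v) for
   its symmetrised product.  The proof has four steps.
   1. Expanding the commutators, [..[D, x_v1], ..], x_vw](1) is the signed sum,
      over all masks m, of P(rev of the unselected letters) * D(P(selected letters)).
   2. Averaged over all orderings of the letters, the term of a mask depends only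
      on the number j of selected letters; call it W j.
   3. Averaging once more (characteristic 0) replaces P by xi inside D.  The rule
      defining d^mu deletes one letter equal to mu; moving it to the end of the
      word and undoing the symmetrisation shows W j = j * T, where T marks the
      last letter and is independent of j.
   4. Hence the sum is T * sum_m (-1)^#unselected * #selected = T * 0 for w >= 2.
   Only the action of d^mu on symmetrised monomials and d^mu(1) = 0 are used. *)

Fixpoint masks (l : nat) : seq bitseq :=
  if l is l'.+1 then flatten [seq [:: rcons m true; rcons m false] | m <- masks l']
  else [:: [::]].

Lemma size_masks l m : m \in masks l -> size m = l.
Proof.
elim: l m => [|l IH] m /=; first by rewrite inE => /eqP ->.
case/flattenP=> _ /mapP[m' m'_in ->]; rewrite !inE.
by case/orP=> /eqP ->; rewrite size_rcons (IH _ m'_in).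
Qed.

(* Summing a sign over the masks of length [l.+1] cancels in pairs. *)
Lemma sum_masks_sign (R : pzRingType) l :
  \sum_(m <- masks l.+1) ((-1) ^+ count negb m : R) = 0.
Proof.
rewrite big_flatten /= big_map big1_seq // => m _.
by rewrite big_cons big_seq1 -!cats1 !count_cat /= !addn0 addn1 exprS mulN1r subrr.
Qed.

Lemma sum_masks_sign_count (R : pzRingType) l : (2 <= l)%N ->
  \sum_(m <- masks l) ((-1) ^+ count negb m : R) *+ count id m = 0.
Proof.
case: l => [|[|l]] // _.
rewrite [masks _]/= big_flatten big_map -[RHS](sum_masks_sign R l).
apply: eq_bigr => m _; rewrite big_cons big_seq1 -!cats1 !count_cat /=.
by rewrite !addn0 !addn1 exprS mulN1r mulrS mulNrn addrK.
Qed.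

Section NestedCommutators.
Variables (k : fieldType) (U : algType k) (n : nat) (x : 'I_n -> U).

Definition wprod (v : seq 'I_n) : U := \prod_(a <- v) x a.

Lemma wprod_cat v1 v2 : wprod (v1 ++ v2) = wprod v1 * wprod v2.
Proof. exact: big_cat. Qed.

(* Expanding the nested commutator of any map [D0] by the letters of [v]:
   each letter goes either to the right of [D0] (bit true) or to its left
   (bit false, with a sign), the left ones in reverse order. *)
Lemma nested_comm_expand (D0 : U -> U) v u :
  nested_comm x D0 v u = \sum_(m <- masks (size v))
    ((-1) ^+ count negb m : k) *:
      (wprod (rev (mask (map negb m) v)) * D0 (wprod (mask m v) * u)).
Proof.
rewrite /nested_comm; elim/last_ind: v u => [|v a IH] u.
  by rewrite big_seq1 /= scale1r /wprod !big_nil !mul1r.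
rewrite foldl_rcons /commx !IH size_rcons /= big_flatten /= big_map.
rewrite mulr_sumr -sumrN -big_split /=; apply: eq_big_seq => m /size_masks sz_m.
rewrite big_cons big_seq1 /= -!cats1 !count_cat /= !map_cat /= !addn0 addn1.
rewrite !mask_cat ?size_map // /= !cats0 !cats1 rev_rcons exprS mulN1r scaleNr.
rewrite /wprod big_cons -cats1 big_cat big_seq1 /=; congr (_ + - _).
  by rewrite mulrA.
by rewrite -scalerAr !mulrA.
Qed.

End NestedCommutators.

Lemma take_enum_ord w j (le_jw : (j <= w)%N) :
  take j (enum 'I_w) = [seq widen_ord le_jw i | i <- enum 'I_j].
Proof.
apply: (inj_map val_inj); rewrite map_take val_enum_ord take_iota (minn_idPl le_jw).
by rewrite -map_comp (eq_map (_ : val \o widen_ord le_jw =1 val)) ?val_enum_ord.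
Qed.

Lemma perm_enum_perm j (t : 'S_j) : perm_eq [seq t i | i <- enum 'I_j] (enum 'I_j).
Proof.
rewrite -val_ord_tuple; apply/tuple_permP; exists t.
by apply: eq_map => i; rewrite tnth_ord_tuple.
Qed.

Lemma dropi_val n m (t : m.+1.-tuple 'I_n) (i : 'I_m.+1) :
  val (dropi t i) = take i t ++ drop i.+1 t.
Proof.
have a0 := tnth t i; have lt_i := ltn_ord i; have sz_t := size_tuple t.
apply: (@eq_from_nth _ a0).
  by rewrite size_map size_enum_ord size_cat size_take size_drop sz_t lt_i; lia.
move=> j; rewrite size_map size_enum_ord => lt_j.
rewrite (nth_map (Ordinal lt_j)) ?size_enum_ord // (tnth_nth a0) /= nth_enum_ord //.
rewrite nth_cat size_take sz_t lt_i /bump; case: ltnP => le_ij /=.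
  by rewrite nth_take.
by rewrite nth_drop; congr nth; lia.
Qed.

Lemma perm_mask_cat (T : eqType) (m : bitseq) (s : seq T) : size m = size s ->
  perm_eq (mask m s ++ mask (map negb m) s) s.
Proof.
elim: s m => [|a s IH] [|b m] //= [sz_m].
case: b => /=; first by rewrite perm_cons IH.
by rewrite -cat1s perm_catCA /= perm_cons IH.
Qed.

Definition move_last (T : Type) (a0 : T) (i : nat) (v : seq T) : seq T :=
  take i v ++ drop i.+1 v ++ [:: nth a0 v i].

Lemma map_move_last (T T' : Type) (f : T -> T') a0 i (v : seq T) : (i < size v)%N ->
  map f (move_last a0 i v) = move_last (f a0) i (map f v).
Proof. by move=> lt_i; rewrite /move_last !map_cat map_drop map_take /= (nth_map a0). Qed.

Lemma perm_move_last (T : eqType) a0 i (v : seq T) : (i < size v)%N ->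
  perm_eq (move_last a0 i v) v.
Proof.
move=> lt_i; rewrite /move_last -[X in perm_eq _ X](cat_take_drop i) (drop_nth a0 lt_i).
by rewrite perm_cat2l cats1 perm_rcons.
Qed.

Lemma move_last_split (T : Type) (a a0 : T) i j m (v : seq T) :
  size v = m -> (i <= j)%N -> (j < m)%N ->
  let u := move_last a0 i v in
  [/\ nth a u m.-1 = nth a v i,
      take j (take m.-1 u) = take i v ++ drop i.+1 (take j.+1 v) &
      drop j (take m.-1 u) = drop j.+1 v].
Proof.
move=> sz_v le_ij lt_jm /=.
have sz_i : size (take i v) = i by rewrite size_takel //; lia.
have sz_rest : size (take i v ++ drop i.+1 v) = m.-1 by rewrite size_cat sz_i size_drop; lia.
rewrite /move_last catA nth_cat sz_rest ltnn subnn take_size_cat //.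
rewrite take_cat drop_cat sz_i ltnNge le_ij take_drop drop_drop /=.
split; first by rewrite (set_nth_default a) //; lia.
  by congr (_ ++ drop _ (take _ _)); lia.
by congr drop; lia.
Qed.

Section Orderings.
Variables (n w : nat) (alpha : 'I_w -> 'I_n) (V : nmodType).

Local Notation word s := [seq alpha (s i) | i <- enum 'I_w].

Lemma size_word (s : 'S_w) : size (word s) = w.
Proof. by rewrite size_map size_enum_ord. Qed.

Lemma sum_word_perm (F : seq 'I_n -> V) (l : seq 'I_w) : perm_eq l (enum 'I_w) ->
  \sum_(s : 'S_w) F [seq alpha (s i) | i <- l] = \sum_(s : 'S_w) F (word s).
Proof.
move=> lP; have /tuple_permP[p ->] : perm_eq l (ord_tuple w) by rewrite val_ord_tuple.
rewrite [RHS](reindex_inj (mulgI p)); apply: eq_bigr => s _; congr F.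
rewrite -map_comp -val_ord_tuple; apply: eq_map => i /=.
by rewrite tnth_ord_tuple permM.
Qed.

Lemma sum_word_prefix_perm (F : seq 'I_n -> seq 'I_n -> V) j (le_jw : (j <= w)%N) (t : 'S_j) :
  \sum_(s : 'S_w) F (take j (word s)) (drop j (word s)) =
  \sum_(s : 'S_w) F [seq alpha (s (widen_ord le_jw (t i))) | i <- enum 'I_j] (drop j (word s)).
Proof.
pose l := [seq widen_ord le_jw (t i) | i <- enum 'I_j] ++ drop j (enum 'I_w).
have lP : perm_eq l (enum 'I_w).
  rewrite -[X in perm_eq _ X](cat_take_drop j) perm_cat2r take_enum_ord.
  by rewrite (map_comp (widen_ord le_jw) t) perm_map // perm_enum_perm.
rewrite -(sum_word_perm (fun v => F (take j v) (drop j v)) lP); apply: eq_bigr => s _.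
rewrite map_cat -map_comp map_drop.
have szj : size [seq alpha (s (widen_ord le_jw (t i))) | i <- enum 'I_j] = j.
  by rewrite size_map size_enum_ord.
by rewrite take_size_cat ?drop_size_cat.
Qed.

End Orderings.

Section Symmetrisation.
Variables (k : fieldType) (U : algType k) (n : nat) (x : 'I_n -> U).
Hypothesis char0 : [pchar k] =i pred0.

Lemma natr_fact_neq0 m : (m`!%:R : k) != 0.
Proof. by move/pcharf0P: char0 => ->; rewrite -lt0n fact_gt0. Qed.

Lemma symseq_nil : symseq x [::] = 1.
Proof.
rewrite /symseq /symprod /= fact0 invr1 scale1r.
by under eq_bigr do rewrite big_ord0; rewrite sumr_const card_Sn fact0.
Qed.

Lemma symprod_symseq m (c : m.-tuple 'I_n) : symprod x c = symseq x c.
Proof.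
case: c => v /[dup] /eqP <- sz_v.
by rewrite /symseq; congr symprod; apply: val_inj.
Qed.

(* Summing the products of all rearrangements of a tuple gives [m!] times its
   symmetrised product; this is where characteristic 0 is needed. *)
Lemma sum_perm_wprod m (c : m.-tuple 'I_n) :
  \sum_(t : 'S_m) wprod x [seq tnth c (t i) | i <- enum 'I_m] = m`!%:R *: symprod x c.
Proof.
rewrite /symprod scalerA mulfV ?natr_fact_neq0 // scale1r.
by apply: eq_bigr => t _; rewrite /wprod big_map enumT.
Qed.

Variables (w : nat) (alpha : 'I_w -> 'I_n).
Local Notation word s := [seq alpha (s i) | i <- enum 'I_w].

Lemma sum_word_symmetrise (f : {linear U -> U}) (A : seq 'I_n -> U) j : (j <= w)%N ->
  \sum_(s : 'S_w) A (drop j (word s)) * f (wprod x (take j (word s))) =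
  \sum_(s : 'S_w) A (drop j (word s)) * f (symseq x (take j (word s))).
Proof.
move=> le_jw; apply: (scalerI (natr_fact_neq0 j)).
rewrite [LHS]scaler_nat -[in LHS]card_Sn -sumr_const.
transitivity (\sum_(t : 'S_j) \sum_(s : 'S_w)
    A (drop j (word s)) * f (wprod x [seq alpha (s (widen_ord le_jw (t i))) | i <- enum 'I_j])).
  apply: eq_bigr => t _.
  exact: (sum_word_prefix_perm _ (fun c d => A d * f (wprod x c)) le_jw t).
rewrite exchange_big scaler_sumr; apply: eq_bigr => s _.
pose c := [tuple alpha (s (widen_ord le_jw i)) | i < j].
have -> : take j (word s) = c by rewrite /= -map_take take_enum_ord -map_comp.
rewrite -mulr_sumr -linear_sum scalerAr -linearZ -symprod_symseq -sum_perm_wprod.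
congr (_ * f _); apply: eq_bigr => t _; congr wprod.
by apply: eq_map => i; rewrite tnth_mktuple.
Qed.

End Symmetrisation.

Section Derivation.
Variables (k : fieldType) (U : algType k) (n : nat) (x : 'I_n -> U).
Hypothesis char0 : [pchar k] =i pred0.
Variables (mu : 'I_n) (D : {linear U -> U}).
Hypothesis D_def : forall (m : nat) (t : m.+1.-tuple 'I_n),
  D (symprod x t) = \sum_(i < m.+1) (tnth t i == mu)%:R *: symprod x (dropi t i).
Hypothesis D_one : D 1 = 0.

Lemma D_symseq (v : seq 'I_n) : D (symseq x v) =
  \sum_(i < size v) ((nth mu v i == mu)%:R : k) *: symseq x (take i v ++ drop i.+1 v).
Proof.
case: v => [|a v]; first by rewrite symseq_nil D_one big_ord0.
rewrite {1}/symseq D_def; apply: eq_bigr => i _.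
by rewrite (tnth_nth mu) symprod_symseq dropi_val.
Qed.

Variables (w : nat) (alpha : 'I_w -> 'I_n).
Local Notation word s := [seq alpha (s i) | i <- enum 'I_w].
Local Notation marked s := (((nth mu (word s) w.-1 == mu)%:R : k)).

(* The total contribution, averaged over orderings, of the masks selecting
   [j] letters: the first [j] letters go right of [D], the others left. *)
Definition W (j : nat) : U :=
  \sum_(s : 'S_w) wprod x (drop j (word s)) * D (wprod x (take j (word s))).

(* [D] applied to the last letter only; [W j] will be [j] copies of it. *)
Definition T : U := \sum_(s : 'S_w) marked s *: wprod x (take w.-1 (word s)).

Definition Tsym (j : nat) : U := \sum_(s : 'S_w)
  marked s *: (wprod x (drop j (take w.-1 (word s))) * symseq x (take j (take w.-1 (word s)))).

Lemma W_symseq j : (j <= w)%N ->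
  W j = \sum_(s : 'S_w) wprod x (drop j (word s)) * D (symseq x (take j (word s))).
Proof. exact: sum_word_symmetrise. Qed.

Lemma W0 : W 0 = 0.
Proof. by rewrite W_symseq // big1 // => s _; rewrite take0 symseq_nil D_one mulr0. Qed.

Lemma sum_move_last i j : (i <= j)%N -> (j < w)%N ->
  \sum_(s : 'S_w) ((nth mu (word s) i == mu)%:R : k) *:
     (wprod x (drop j.+1 (word s)) *
      symseq x (take i (word s) ++ drop i.+1 (take j.+1 (word s)))) = Tsym j.
Proof.
move=> le_ij lt_jw; have lt_iw := leq_ltn_trans le_ij lt_jw.
have lP : perm_eq (move_last (Ordinal lt_iw) i (enum 'I_w)) (enum 'I_w).
  by apply: perm_move_last; rewrite size_enum_ord.
rewrite /Tsym -(sum_word_perm _ (fun v => ((nth mu v w.-1 == mu)%:R : k) *: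
   (wprod x (drop j (take w.-1 v)) * symseq x (take j (take w.-1 v)))) lP).
apply: eq_bigr => s _; rewrite map_move_last ?size_enum_ord //.
have [-> -> ->] :=
  move_last_split mu (alpha (s (Ordinal lt_iw))) (size_word alpha s) le_ij lt_jw.
by [].
Qed.

(* Expanding [D] on the symmetrised prefix of length [j.+1] produces [j.+1]
   terms, each equal to [Tsym j] after moving the deleted letter to the end. *)
Lemma W_succ j : (j < w)%N -> W j.+1 = Tsym j *+ j.+1.
Proof.
move=> lt_jw; rewrite W_symseq // -[j.+1 in RHS]card_ord -sumr_const.
transitivity (\sum_(s : 'S_w) \sum_(i < j.+1) ((nth mu (word s) i == mu)%:R : k) *:
  (wprod x (drop j.+1 (word s)) *
   symseq x (take i (word s) ++ drop i.+1 (take j.+1 (word s))))).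
  apply: eq_bigr => s _; rewrite D_symseq size_takel ?size_word // mulr_sumr.
  by apply: eq_bigr => i _; rewrite -scalerAr nth_take // take_takel // ltnW.
by rewrite exchange_big; apply: eq_bigr => i _; apply: sum_move_last; rewrite // -ltnS.
Qed.

(* Undoing the symmetrisation of the first [j] letters, by averaging again. *)
Lemma Tsym_unsym j : (j < w)%N -> Tsym j = \sum_(s : 'S_w)
  marked s *: (wprod x (drop j (take w.-1 (word s))) * wprod x (take j (take w.-1 (word s)))).
Proof.
move=> lt_jw; have le_j : (j <= w.-1)%N by rewrite -ltnS (ltn_predK lt_jw).
pose A d := ((nth mu d (w.-1 - j) == mu)%:R : k) *: wprod x (take (w.-1 - j) d).
have split_term (g : seq 'I_n -> U) (s : 'S_w) :
    marked s *: (wprod x (drop j (take w.-1 (word s))) * g (take j (take w.-1 (word s)))) =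
    A (drop j (word s)) * g (take j (word s)).
  by rewrite /A take_takel // take_drop subnK // nth_drop subnKC // -scalerAl.
rewrite /Tsym.
transitivity (\sum_(s : 'S_w) A (drop j (word s)) * idfun (symseq x (take j (word s)))).
  by apply: eq_bigr => s _; rewrite split_term.
rewrite -(sum_word_symmetrise x char0 alpha idfun) ?(leq_trans le_j) ?leq_pred //.
by apply: eq_bigr => s _; rewrite split_term.
Qed.

(* Rotating the unmarked letters turns the split product back into one product. *)
Lemma sum_rotate j : \sum_(s : 'S_w)
  marked s *: (wprod x (drop j (take w.-1 (word s))) * wprod x (take j (take w.-1 (word s)))) = T.
Proof.
have lP : perm_eq (rot j (take w.-1 (enum 'I_w)) ++ drop w.-1 (enum 'I_w)) (enum 'I_w).
  by rewrite -[X in perm_eq _ X](cat_take_drop w.-1) perm_cat2r perm_rot.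
rewrite /T -(sum_word_perm alpha (fun v => ((nth mu v w.-1 == mu)%:R : k) *:
   wprod x (take w.-1 v)) lP); apply: eq_bigr => s _.
rewrite map_cat map_rot map_take map_drop.
have sz_v' : size (take w.-1 (word s)) = w.-1 by rewrite size_takel // size_word leq_pred.
rewrite take_size_cat ?size_rot // nth_cat size_rot sz_v' ltnn subnn nth_drop addn0.
by rewrite /rot wprod_cat.
Qed.

Lemma W_val j : (j <= w)%N -> W j = T *+ j.
Proof.
case: j => [|j] le_jw; first by rewrite W0.
by rewrite W_succ // Tsym_unsym // sum_rotate.
Qed.

Lemma sum_mask_term (m : bitseq) : size m = w ->
  \sum_(s : 'S_w) ((-1) ^+ count negb m : k) *:
     (wprod x (rev (mask (map negb m) (word s))) * D (wprod x (mask m (word s)) * 1))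
  = ((-1) ^+ count negb m : k) *: W (count id m).
Proof.
move=> sz_m; rewrite -scaler_sumr; congr (_ *: _).
have lP : perm_eq (mask m (enum 'I_w) ++ rev (mask (map negb m) (enum 'I_w))) (enum 'I_w).
  apply/seq.permP => p; rewrite count_cat count_rev -count_cat.
  by apply/seq.permP/perm_mask_cat; rewrite size_enum_ord.
rewrite /W -(sum_word_perm alpha (fun v => wprod x (drop (count id m) v) *
   D (wprod x (take (count id m) v))) lP); apply: eq_bigr => s _.
have sz_ms : size m = size (word s) by rewrite size_word.
rewrite map_cat map_rev !map_mask take_size_cat ?drop_size_cat ?size_mask //.
by rewrite mulr1.
Qed.

Lemma sum_nested_comm_one : (2 <= w)%N ->
  \sum_(s : 'S_w) nested_comm x D (word s) 1 = 0.
Proof.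
move=> le2w; under eq_bigr do rewrite nested_comm_expand size_word.
rewrite exchange_big /=.
transitivity (\sum_(m <- masks w) (((-1) ^+ count negb m : k) *+ count id m) *: T).
  apply: eq_big_seq => m /size_masks sz_m.
  rewrite sum_mask_term // W_val; last by rewrite -sz_m count_size.
  by rewrite -scalerMnr scalerMnl.
by rewrite -scaler_suml sum_masks_sign_count // scale0r.
Qed.

End Derivation.

Theorem lemma4p6
  (k : fieldType) (char0 : [pchar k] =i pred0)
  (n : nat) (C : 'I_n -> 'I_n -> 'I_n -> k)
  (C_anti : forall a b c, C a b c = - C b a c)
  (C_jacobi : forall a b c e,
     \sum_(d < n) (C a b d * C d c e + C b c d * C d a e + C c a d * C d b e) = 0)
  (U : algType k) (x : 'I_n -> U)
  (x_comm : forall a b, x a * x b - x b * x a = \sum_(c < n) C a b c *: x c)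
  (pbw_span : forall u : U, exists l : seq (seq 'I_n * k),
     u = \sum_(p <- l) p.2 *: symseq x p.1)
  (pbw_indep : forall l : seq (seq 'I_n * k),
     uniq [seq monkey p.1 | p <- l] ->
     \sum_(p <- l) p.2 *: symseq x p.1 = 0 ->
     all (fun p => p.2 == 0) l)
  (mu : 'I_n) (D : {linear U -> U})
  (D_def : forall (m : nat) (t : m.+1.-tuple 'I_n),
     D (symprod x t) = \sum_(i < m.+1) (tnth t i == mu)%:R *: symprod x (dropi t i))
  (D_one : D 1 = 0)
  (w : nat) (hw : (2 <= w)%N) (alpha : 'I_w -> 'I_n) :
  \sum_(s : 'S_w) nested_comm x D [seq alpha (s i) | i <- enum 'I_w] 1 = 0.
Proof. exact: (sum_nested_comm_one char0 D_def D_one alpha hw). Qed.
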